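(* Assume $\mu>0$. Let $\alpha\in(0,1)$, $c\in(0,1)$, $C\ge0$, and set $\alpha^k\equiv\alpha$. Let $\psi_i^k,\epsilon_i^k,\tilde x_i^k,\epsilon_{\psi,i}^k$ ($k\ge0$, $i\in[m]$) be random objects on a common probability space such that, almost surely, $(\{\psi_i^k\},\{\alpha^k\},\{\epsilon_i^k\})$ is an inexact estimating sequence, $\epsilon_{\psi,i}^0=0$ and $M(\tilde x_i^k)\le\min_x\psi_i^k(x)+\epsilon_{\psi,i}^k$ for all $k,i$; assume $\psi_i^0$ is deterministic and all expectations below are finite. With $\epsilon_{tot,i}^k:=\epsilon_{\psi,i}^{k+1}-(1-\alpha)\epsilon_{\psi,i}^k+\alpha\epsilon_i^k$, suppose $$\frac1m\sum_{i=1}^m\mathbb{E}\big[|\epsilon_{tot,i}^k|\big]\le C(1-c\alpha)^k\quad\forall k\ge0.$$ Then for all $k\ge0$, $$\frac1m\sum_{i=1}^m\mathbb{E}\big[\|\tilde x_i^k-x^\star\|^2\big]\le c_{scvx}(1-c\alpha)^k,\qquad c_{scvx}:=\frac1m\sum_{i=1}^m\frac{2}{\mu_M}\Big(\psi_i^0(x^\star)-M^\star+\frac{C}{\alpha(1-c)}\Big).$$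
   Context: Setting: $u=f+r$ on $\mathbb{R}^d$ with $f=\frac1m\sum_{i=1}^m f_i$, each $f_i$ continuously differentiable and convex, $f$ $\mu$-strongly convex and $L$-smooth, $r$ proper closed convex; $x^\star$ is the minimizer of $u$. Fix $\delta>0$. $M(x):=\min_y\{u(y)+\frac\delta2\|y-x\|^2\}$ (Moreau envelope; $\delta$-smooth and $\mu_M$-strongly convex with $\mu_M:=\delta\mu/(\delta+\mu)$), $M^\star:=\min M=u(x^\star)$. Definition (inexact estimating sequence): functions $\psi_i^k:\mathbb{R}^d\to\mathbb{R}$ (each attaining its minimum), numbers $\alpha^k$ and reals $\epsilon_i^k$ ($k\ge0$, $i\in[m]$) such that (i) $\alpha^k\in(0,1)$ and $\prod_{t=0}^k(1-\alpha^t)\to0$; (ii) $\psi_i^{k+1}(x^\star)\le(1-\alpha^k)\psi_i^k(x^\star)+\alpha^k(M^\star+\epsilon_i^k)$ for all $k,i$. *)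

From HB Require Import structures.
From mathcomp Require Import all_boot all_order all_algebra.
From mathcomp Require Import all_classical all_reals all_analysis.
Set Implicit Arguments. Unset Strict Implicit. Unset Printing Implicit Defensive.
Import Order.TTheory GRing.Theory Num.Theory.
Import numFieldNormedType.Exports.
Local Open Scope classical_set_scope.
Local Open Scope ring_scope.

Section defs.
Context {R : realType} {d : nat}.
Local Notation V := 'rV[R]_d.

Definition dotp (x y : V) : R := \sum_(j < d) x 0 j * y 0 j.
Definition sqnorm (x : V) : R := dotp x x.
Definition enorm (x : V) : R := Num.sqrt (sqnorm x).

Definition grad (f : V -> R) (x : V) : V :=
  \row_(j < d) ('D_(delta_mx 0 j) f x).

Definition C1 (f : V -> R) : Prop :=
  (forall x, differentiable f x) /\ continuous (grad f).

Definition convex_fun (f : V -> R) : Prop :=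
  forall x y (t : R), 0 <= t <= 1 ->
    f (t *: x + (1 - t) *: y) <= t * f x + (1 - t) * f y.

Definition strongly_convex (mu : R) (f : V -> R) : Prop :=
  forall x y (t : R), 0 <= t <= 1 ->
    f (t *: x + (1 - t) *: y)
      <= t * f x + (1 - t) * f y - mu / 2 * t * (1 - t) * sqnorm (x - y).

Definition smooth (L : R) (f : V -> R) : Prop :=
  (forall x, differentiable f x) /\
  forall x y, enorm (grad f x - grad f y) <= L * enorm (x - y).

Definition econvex (r : V -> \bar R) : Prop :=
  forall (x y : V) (t : R), 0 < t < 1 ->
    let z := t *: x + (1 - t) *: y in
    (r z <= t%:E * r x + (1 - t)%:E * r y)%E.

Definition proper_fun (r : V -> \bar R) : Prop :=
  (forall x, r x != -oo%E) /\ exists x, (r x < +oo)%E.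

Definition closed_fun (r : V -> \bar R) : Prop := lower_semicontinuous r.

Definition moreau (u : V -> \bar R) (delta : R) (x : V) : \bar R :=
  ereal_inf [set (u y + (delta / 2 * sqnorm (y - x))%:E)%E | y in [set: V]].

(* minimum value of a function R^d -> R (it is attained in our uses) *)
Definition minval (psi : V -> R) : R := inf (range psi).

Definition inexact_est_seq (m : nat) (psi : nat -> 'I_m -> V -> R)
    (alpha : nat -> R) (eps : nat -> 'I_m -> R) (xstar : V) (Mstar : R) : Prop :=
  (forall k i, exists x0, forall x, psi k i x0 <= psi k i x) /\
  (forall k, 0 < alpha k < 1) /\
  ((fun k => \prod_(t < k.+1) (1 - alpha t)) @ \oo --> (0 : R)) /\
  (forall k i, psi k.+1 i xstar <=
       (1 - alpha k) * psi k i xstar + alpha k * (Mstar + eps k i)).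
End defs.

From HB Require Import structures.
From mathcomp Require Import all_boot all_order all_algebra.
From mathcomp Require Import all_classical all_reals all_analysis.
From mathcomp Require Import ring lra.
Import Order.TTheory GRing.Theory Num.Theory.
Import numFieldNormedType.Exports.
Local Open Scope classical_set_scope.
Local Open Scope ring_scope.

(* Strong convexity of f and optimality of x⋆ give quadratic growth of
   u = f + r around x⋆; infimal convolution with (delta/2)||.||^2 turns this
   into quadratic growth M(x) >= M⋆ + mu_M/2 ||x - x⋆||^2 of the Moreau
   envelope.  Along the estimating sequence, M(x~_k) - M⋆ is bounded by the
   gap D_k = psi_k(x⋆) - M⋆ + eps_psi_k, which obeys
   D_{k+1} <= (1 - alpha) D_k + eps_tot_k.  So D_k is dominated by the
   solution B_k of the linear recursion driven by |eps_tot_k|, and the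
   averaged expectation of B_k decays like (1 - c alpha)^k because its
   forcing does and 1 - alpha < 1 - c alpha. *)

Lemma le_of_forall_shrink (R : realFieldType) (a b c : R) :
  (forall t, 0 < t < 1 -> a + (1 - t) * c <= b) -> a + c <= b.
Proof.
move=> h; apply/ler_addgt0Pr => e he.
pose t := Num.min (1 / 2 : R) (e / (`|c| + 1)).
have hc1 : 0 < `|c| + 1 by rewrite ltr_pwDr.
have ht0 : 0 < t by rewrite lt_min; apply/andP; split; [lra | exact: divr_gt0].
have ht1 : t < 1 by rewrite gt_min; apply/orP; left; lra.
have htc : t * c <= e.
  have hte : t * (`|c| + 1) <= e by rewrite -ler_pdivlMr // ge_min lexx orbT.
  have := ler_wpM2l (ltW ht0) (ler_norm c); nra.
have := h t; rewrite ht0 ht1 => /(_ isT); lra.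
Qed.

Section quadratic_growth.
Context {R : realType} {d : nat}.
Local Notation V := 'rV[R]_d.

Lemma sqnorm_ge0 (x : V) : 0 <= sqnorm x.
Proof. by apply: sumr_ge0 => j _; rewrite -expr2 sqr_ge0. Qed.

(* The weight mu * de / (mu + de) is the infimal value of
   mu |y - a|^2 + de |y - b|^2 over y, per unit of |a - b|^2. *)
Lemma sqnorm_sub_le_weighted (y a b : V) (mu de : R) :
  0 < mu -> 0 < de ->
  mu * de / (mu + de) * sqnorm (a - b)
    <= mu * sqnorm (y - a) + de * sqnorm (y - b).
Proof.
move=> hmu hde; rewrite /sqnorm /dotp !mulr_sumr -big_split /=.
apply: ler_sum => j _; rewrite !mxE.
set p := y 0 j; set q := a 0 j; set s := b 0 j.
rewrite -subr_ge0.
have -> : mu * ((p - q) * (p - q)) + de * ((p - s) * (p - s))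
          - mu * de / (mu + de) * ((q - s) * (q - s))
        = (mu * (p - q) + de * (p - s)) ^+ 2 / (mu + de).
  by field; lra.
by rewrite divr_ge0 ?sqr_ge0 //; lra.
Qed.

Lemma proper_minimizer_fin (f : V -> R) (r : V -> \bar R) (xs : V) :
  proper_fun r -> (forall y, ((f xs)%:E + r xs <= (f y)%:E + r y)%E) ->
  r xs \is a fin_num.
Proof.
move=> [hninf [x0 hx0]] hmin; case E: (r xs) (hninf xs) => [rs| |] // _.
move: (hmin x0); rewrite E addey //.
by case: (r x0) hx0 (hninf x0).
Qed.

Lemma strongly_convex_growth (f : V -> R) (r : V -> \bar R) (mu rs : R)
    (xs : V) :
  strongly_convex mu f -> proper_fun r -> econvex r -> r xs = rs%:E ->
  (forall y, ((f xs)%:E + r xs <= (f y)%:E + r y)%E) ->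
  forall y, ((f xs + rs + mu / 2 * sqnorm (y - xs))%:E <= (f y)%:E + r y)%E.
Proof.
move=> hsc [hninf _] hcvx Ers hmin y.
case Ey: (r y) (hninf y) => [ry| |] // _; last by rewrite addey // leey.
rewrite -EFinD lee_fin; apply: le_of_forall_shrink => t /andP[ht0 ht1].
set z := t *: y + (1 - t) *: xs.
have hf := hsc y xs t ltac:(apply/andP; split; lra).
have hr := hcvx y xs t ltac:(exact/andP).
have hz := hmin z.
rewrite /= -/z Ey Ers in hr.
case Ez: (r z) (hninf z) hr hz => [rz| |] // _.
rewrite -!EFinM -EFinD lee_fin Ers -!EFinD lee_fin => hr hz.
set s := sqnorm (y - xs) in hf *.
(* Subtracting the convexity bound at z leaves t times the claim. *)
have : t * (f xs + rs + (1 - t) * (mu / 2 * s)) <= t * (f y + ry) by nra.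
by rewrite ler_pM2l.
Qed.

Lemma moreau_growth (u : V -> \bar R) (mu delta us : R) (xs : V) :
  0 < mu -> 0 < delta ->
  (forall y, ((us + mu / 2 * sqnorm (y - xs))%:E <= u y)%E) ->
  forall x, ((us + delta * mu / (delta + mu) / 2 * sqnorm (x - xs))%:E
              <= moreau u delta x)%E.
Proof.
move=> hmu hde hu x; apply: le_ereal_inf_tmp => _ [y _ <-].
apply: (le_trans _ (leeD2r _ (hu y))); rewrite -EFinD lee_fin.
have := @sqnorm_sub_le_weighted y x xs delta mu hde hmu.
have -> : delta * mu / (delta + mu) / 2 * sqnorm (x - xs)
        = (delta * mu / (delta + mu) * sqnorm (x - xs)) / 2 by ring.
lra.
Qed.

Lemma moreau_growth_minimizer (f : V -> R) (r : V -> \bar R)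
    (mu delta : R) (xs : V) :
  0 < mu -> 0 < delta -> strongly_convex mu f -> proper_fun r -> econvex r ->
  let u x := ((f x)%:E + r x)%E in
  (forall y, (u xs <= u y)%E) ->
  forall x, ((fine (u xs) + delta * mu / (delta + mu) / 2 * sqnorm (x - xs))%:E
              <= moreau u delta x)%E.
Proof.
move=> hmu hde hsc hpr hcvx u hmin.
have hfin := proper_minimizer_fin _ _ _ hpr hmin.
apply: moreau_growth hmu hde _ => y; rewrite /u fineD //.
exact: strongly_convex_growth hsc hpr hcvx (esym (fineK hfin)) hmin y.
Qed.

End quadratic_growth.

Lemma geometric_ub_rec (R : realFieldType) (a b : nat -> R) (rho q C K : R) :
  0 <= rho -> 0 <= q -> C <= (q - rho) * K -> a 0%N <= K ->
  (forall k, b k <= C * q ^+ k) -> (forall k, a k.+1 <= rho * a k + b k) ->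
  forall k, a k <= K * q ^+ k.
Proof.
move=> hrho hq hC ha0 hb ha; elim=> [|k IH]; first by rewrite expr0 mulr1.
have hqk : 0 <= q ^+ k := exprn_ge0 k hq.
apply: (le_trans (ha k)); rewrite exprS.
have := ler_wpM2l hrho IH; have := ler_wpM2r hqk hC; have := hb k; nra.
Qed.

Section linear_recursion.
Context {R : realDomainType}.
Variables (rho b0 : R) (y : nat -> R).

Fixpoint linrec (k : nat) : R :=
  if k is k'.+1 then rho * linrec k' + y k' else b0.

Lemma linrec_ub (x : nat -> R) :
  0 <= rho -> x 0%N <= b0 -> (forall k, x k.+1 <= rho * x k + y k) ->
  forall k, x k <= linrec k.
Proof.
move=> hrho hx0 hx; elim=> [|k IH] //=.
by apply: (le_trans (hx k)); rewrite lerD2r ler_wpM2l.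
Qed.

Lemma linrec_ge0 k :
  0 <= rho -> 0 <= b0 -> (forall k, 0 <= y k) -> 0 <= linrec k.
Proof.
by move=> hrho hb0 hy; elim: k => [|k IH] //=; rewrite addr_ge0 ?mulr_ge0.
Qed.

End linear_recursion.

Section estimating_sequence.
Context {R : realType} {d m : nat}.
Local Notation V := 'rV[R]_d.

Lemma minval_le (psi : V -> R) (y : V) :
  (exists x0, forall x, psi x0 <= psi x) -> minval psi <= psi y.
Proof.
move=> [x0 hx0]; apply: ge_inf; last by exists y.
by exists (psi x0) => _ [z _ <-].
Qed.

Context {psi : nat -> 'I_m -> V -> R} {alpha : nat -> R}
  {eps : nat -> 'I_m -> R} {xstar : V} {Mstar : R}.
Hypothesis hest : inexact_est_seq psi alpha eps xstar Mstar.

Lemma inexact_est_seq_gapS (epspsi : nat -> 'I_m -> R) k i :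
  psi k.+1 i xstar - Mstar + epspsi k.+1 i
    <= (1 - alpha k) * (psi k i xstar - Mstar + epspsi k i)
       + (epspsi k.+1 i - (1 - alpha k) * epspsi k i + alpha k * eps k i).
Proof. by have [_ [_ [_ hrec]]] := hest; have := hrec k i; lra. Qed.

Lemma inexact_est_seq_sqnorm_le {Mf : V -> \bar R} {muM : R}
    {epspsi : nat -> 'I_m -> R} {xt : nat -> 'I_m -> V} :
  (forall x, ((Mstar + muM / 2 * sqnorm (x - xstar))%:E <= Mf x)%E) ->
  (forall k i, (Mf (xt k i) <= (minval (psi k i) + epspsi k i)%:E)%E) ->
  forall k i, muM / 2 * sqnorm (xt k i - xstar)
                <= psi k i xstar - Mstar + epspsi k i.
Proof.
move=> hM hMx k i.
have := le_trans (hM (xt k i)) (hMx k i); rewrite lee_fin.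
have [hmin _] := hest; have := @minval_le _ xstar (hmin k i); lra.
Qed.

End estimating_sequence.

Lemma inexact_est_seq_sqnorm_le_linrec {R : realType} {d m : nat}
    {psi : nat -> 'I_m -> 'rV[R]_d -> R} {alpha : R} {eps : nat -> 'I_m -> R}
    {xstar : 'rV[R]_d} {Mstar : R} {Mf : 'rV[R]_d -> \bar R} {muM : R}
    {epspsi : nat -> 'I_m -> R} {xt : nat -> 'I_m -> 'rV[R]_d} :
  inexact_est_seq psi (fun=> alpha) eps xstar Mstar ->
  (forall x, ((Mstar + muM / 2 * sqnorm (x - xstar))%:E <= Mf x)%E) ->
  (forall k i, (Mf (xt k i) <= (minval (psi k i) + epspsi k i)%:E)%E) ->
  forall k i, muM / 2 * sqnorm (xt k i - xstar)
    <= linrec (1 - alpha) (psi 0%N i xstar - Mstar + epspsi 0%N i)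
         (fun j => `|epspsi j.+1 i - (1 - alpha) * epspsi j i + alpha * eps j i|) k.
Proof.
move=> hest hM hMx k i.
have [_ [/(_ 0%N) halpha _]] := hest.
apply: le_trans (inexact_est_seq_sqnorm_le hest hM hMx k i) _.
apply: (linrec_ub _ _ _ (fun n => psi n i xstar - Mstar + epspsi n i))
  => [|//|j]; first lra.
apply: le_trans (inexact_est_seq_gapS hest epspsi j i) _.
by rewrite lerD2l ler_norm.
Qed.

Section expectation.
Context {R : realType} {dT : measure_display} {T : measurableType dT}.
Variable P : probability T R.

Lemma ae_witness {Q : T -> Prop} : {ae P, forall w, Q w} -> exists w, Q w.
Proof.
move=> [N [mN PN sub]]; apply: contrapT => hno.
have hN : N = setT.
  by apply/seteqP; split => // w _; apply: sub => /= hw; apply: hno; exists w.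
by move: PN; rewrite hN probability_setT => /eqP; rewrite eqe oner_eq0.
Qed.

Lemma fine_expectationD (X Y : T -> R) : X \in Lfun P 1 -> Y \in Lfun P 1 ->
  fine 'E_P[X + Y] = fine 'E_P[X] + fine 'E_P[Y].
Proof.
by move=> hX hY; rewrite (expectationD hX hY) fineD ?expectation_fin_num.
Qed.

Lemma fine_expectationZ (a : R) (X : T -> R) : X \in Lfun P 1 ->
  fine 'E_P[a *: X] = a * fine 'E_P[X].
Proof.
move=> hX; have -> : a *: X = a \o* X.
  by apply: boolp.funext => w /=; rewrite mulrC.
by rewrite expectationZl // fineM ?expectation_fin_num.
Qed.

Lemma expectation_le_scale (a : R) (X Y : T -> R) : 0 < a ->
  P.-integrable setT (EFin \o X) -> Y \in Lfun P 1 ->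
  (forall w, 0 <= X w) -> (forall w, 0 <= Y w) ->
  {ae P, forall w, a * X w <= Y w} -> ('E_P[X] <= (a^-1 * fine 'E_P[Y])%:E)%E.
Proof.
move=> ha iX hY hX0 hY0 hXY; rewrite -fine_expectationZ // fineK; last first.
  by rewrite expectation_fin_num ?rpredZ.
apply: expectation_le => //.
- exact/measurable_realfun.measurable_EFinP/(measurable_int P iX).
- apply/measurable_realfun.measurable_EFinP/(measurable_int P).
  by apply/Lfun1_integrable; apply: rpredZ.
- by move=> w; apply: mulr_ge0; [rewrite invr_ge0 ltW | exact: hY0].
- apply: filterS hXY => w hw; change (X w <= a^-1 * Y w).
  by rewrite -(ler_pM2l ha) mulrA mulfV ?mul1r ?gt_eqF.
Qed.

Section linrec_expectation.
Variables (rho : R) (b0 : R) (Y : nat -> T -> R).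
Hypothesis hY : forall k, Y k \in Lfun P 1.
Let B k := fun w => linrec rho b0 (Y^~ w) k.

Lemma linrec_Lfun k : B k \in Lfun P 1.
Proof.
elim: k => [|k IH]; first exact: Lfun_cst.
by have -> : B k.+1 = rho *: B k + Y k by []; rewrite rpredD ?rpredZ.
Qed.

Lemma fine_expectation_linrecS k :
  fine 'E_P[B k.+1] = rho * fine 'E_P[B k] + fine 'E_P[Y k].
Proof.
have -> : B k.+1 = rho *: B k + Y k by [].
by rewrite fine_expectationD ?rpredZ ?linrec_Lfun // fine_expectationZ ?linrec_Lfun.
Qed.

Lemma fine_expectation_linrec0 : fine 'E_P[B 0] = b0.
Proof. by rewrite expectation_cst. Qed.

End linrec_expectation.

Lemma mean_expectation_linrec_le {m : nat} {rho q C : R} {b0 : 'I_m -> R}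
    {Y : nat -> 'I_m -> T -> R} :
  (0 < m)%N -> 0 <= rho < q -> 0 <= C -> (forall i, 0 <= b0 i) ->
  (forall k i, Y k i \in Lfun P 1) ->
  (forall k, ((m%:R^-1)%:E * \sum_(i < m) 'E_P[Y k i] <= (C * q ^+ k)%:E)%E) ->
  forall k, m%:R^-1 * \sum_(i < m)
              fine 'E_P[fun w => linrec rho (b0 i) (fun j => Y j i w) k]
    <= (m%:R^-1 * \sum_(i < m) (b0 i + C / (q - rho))) * q ^+ k.
Proof.
move=> hm0 /andP[hrho hq] hC hb0 hY hYC k.
have hm : 0 <= m%:R^-1 :> R by rewrite invr_ge0.
have {}hYC j : m%:R^-1 * \sum_(i < m) fine 'E_P[Y j i] <= C * q ^+ j.
  have := hYC j.
  under eq_bigr => i _ do rewrite -(fineK (expectation_fin_num (hY j i))).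
  by rewrite sumEFin -EFinM lee_fin.
rewrite big_split sumr_const card_ord -[C / _ *+ m]mulr_natr mulrDr mulrCA.
rewrite mulVf ?mulr1 ?pnatr_eq0 -?lt0n //.
pose e n := m%:R^-1 * \sum_(i < m)
             fine 'E_P[fun w => linrec rho (b0 i) (fun j => Y j i w) n].
pose g n := m%:R^-1 * \sum_(i < m) fine 'E_P[Y n i].
apply: (geometric_ub_rec _ e g rho q C) => //.
- lra.
- have : 0 <= m%:R^-1 * \sum_(i < m) b0 i by rewrite mulr_ge0 ?sumr_ge0.
  have : (q - rho) * (C / (q - rho)) = C by field; lra.
  by rewrite mulrDr; nra.
- rewrite /e (eq_bigr _ (fun i _ => fine_expectation_linrec0 rho (b0 i) (Y^~ i))).
  by rewrite lerDl divr_ge0 //; lra.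
- move=> j; rewrite /e /g (eq_bigr _ (fun i _ =>
    fine_expectation_linrecS rho (b0 i) (Y^~ i) (fun j => hY j i) j)).
  by rewrite big_split /= -mulr_sumr; lra.
Qed.

End expectation.

Theorem proposition5
  (R : realType) (d m : nat) (hm : (0 < m)%N)
  (fi : 'I_m -> 'rV[R]_d -> R) (r : 'rV[R]_d -> \bar R)
  (mu L delta : R) (xstar : 'rV[R]_d)
  (hfi_C1 : forall i, C1 (fi i))
  (hfi_cvx : forall i, convex_fun (fi i))
  (hf_sc : strongly_convex mu (fun x => m%:R^-1 * \sum_(i < m) fi i x))
  (hf_sm : smooth L (fun x => m%:R^-1 * \sum_(i < m) fi i x))
  (hr_proper : proper_fun r) (hr_closed : closed_fun r) (hr_cvx : econvex r)
  (hxstar : forall y,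
     ((m%:R^-1 * \sum_(i < m) fi i xstar)%:E + r xstar
      <= (m%:R^-1 * \sum_(i < m) fi i y)%:E + r y)%E)
  (hdelta : 0 < delta)
  (hmu : 0 < mu)
  (alpha c C : R) (halpha : 0 < alpha < 1) (hc : 0 < c < 1) (hC : 0 <= C)
  (dT : measure_display) (T : measurableType dT) (P : probability T R)
  (psi : nat -> 'I_m -> T -> 'rV[R]_d -> R)
  (psi0 : 'I_m -> 'rV[R]_d -> R)
  (eps : nat -> 'I_m -> T -> R)
  (xt : nat -> 'I_m -> T -> 'rV[R]_d)
  (epspsi : nat -> 'I_m -> T -> R) :
  let u := fun x => ((m%:R^-1 * \sum_(i < m) fi i x)%:E + r x)%E in
  let M := moreau u delta in
  let Mstar := fine (u xstar) in
  let muM := delta * mu / (delta + mu) in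
  let epstot := fun k i w =>
    epspsi k.+1 i w - (1 - alpha) * epspsi k i w + alpha * eps k i w in
  (forall i w, psi 0%N i w = psi0 i) ->
  {ae P, forall w,
     inexact_est_seq (fun k i => psi k i w) (fun _ => alpha)
       (fun k i => eps k i w) xstar Mstar /\
     (forall i, epspsi 0%N i w = 0) /\
     (forall k i, (M (xt k i w) <= (minval (psi k i w) + epspsi k i w)%:E)%E)} ->
  (forall k i, P.-integrable [set: T] (fun w => (`|epstot k i w|)%R%:E)) ->
  (forall k i, P.-integrable [set: T]
                 (fun w => (sqnorm (xt k i w - xstar))%:E)) ->
  (forall k, ((m%:R^-1)%:E * \sum_(i < m) 'E_P[fun w => `|epstot k i w|%R]
              <= (C * (1 - c * alpha) ^+ k)%:E)%E) ->
  forall k,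
    ((m%:R^-1)%:E * \sum_(i < m) 'E_P[fun w => sqnorm (xt k i w - xstar)]
     <= ((m%:R^-1 * \sum_(i < m)
            (2 / muM * (psi0 i xstar - Mstar + C / (alpha * (1 - c)))))
         * (1 - c * alpha) ^+ k)%:E)%E.
Proof.
move=> u M Mstar muM epstot hpsi0 hae hint_eps hint_sq hE k.
have hM :=
  moreau_growth_minimizer _ _ _ _ _ hmu hdelta hf_sc hr_proper hr_cvx hxstar.
have hmuM : 0 < muM by rewrite divr_gt0 ?mulr_gt0 //; lra.
pose B i k w := linrec (1 - alpha) (psi0 i xstar - Mstar)
                  (fun j => `|epstot j i w|) k.
have hB : {ae P, forall w, forall k i,
            muM / 2 * sqnorm (xt k i w - xstar) <= B i k w}.
  apply: filterS hae => w [hest [heps0 hMx]] j i.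
  have := inexact_est_seq_sqnorm_le_linrec hest hM hMx j i.
  by rewrite hpsi0 heps0 addr0.
have [w0 hw0] := ae_witness P hB.
have hD0 i : 0 <= psi0 i xstar - Mstar.
  apply: le_trans (hw0 0%N i); rewrite mulr_ge0 ?sqnorm_ge0 // divr_ge0 //; lra.
have hYL j i : (fun w => `|epstot j i w|) \in Lfun P 1.
  by apply/Lfun1_integrable; exact: hint_eps.
have hEsq i : ('E_P[fun w => sqnorm (xt k i w - xstar)]
               <= ((muM / 2)^-1 * fine 'E_P[B i k])%:E)%E.
  apply: expectation_le_scale.
  - by rewrite divr_gt0.
  - exact: hint_sq.
  - exact: linrec_Lfun.
  - by move=> w; apply: sqnorm_ge0.
  - by move=> w; apply: linrec_ge0 => //; lra.
  - by apply: filterS hB => w /(_ k i).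
have hrate : 0 <= 1 - alpha < 1 - c * alpha by apply/andP; split; nra.
have := mean_expectation_linrec_le P hm hrate hC hD0 hYL hE k.
rewrite (_ : 1 - c * alpha - (1 - alpha) = alpha * (1 - c)); last by ring.
move=> hmean.
apply: le_trans (lee_wpmul2l _ (lee_sum _ (fun i _ => hEsq i))) _.
  by rewrite lee_fin invr_ge0.
rewrite sumEFin -EFinM lee_fin -!mulr_sumr invf_div.
rewrite mulrCA [in leRHS]mulrCA -[in leRHS]mulrA.
by apply: ler_wpM2l; [rewrite divr_ge0 // ltW | exact: hmean].
Qed.
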